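(* Let $f(x,y)=x^2y+x^2+y^2-y\in\mathbb{Z}[x,y]$. Define $R^{(1)}(x,x_1)=f(x,x_1)$ and, for $n\ge2$, $R^{(n)}(x,x_n)=\mathrm{Res}_{x_{n-1}}\big(R^{(n-1)}(x,x_{n-1}),\,f(x_{n-1},x_n)\big)$, the resultant with respect to $x_{n-1}$; set $R_n(x)=R^{(n)}(x,x)$. Then $\deg R_n(x)=2^{n+1}-1$ for all $n\ge1$. *)

From mathcomp Require Import all_boot all_order all_algebra.
Set Implicit Arguments. Unset Strict Implicit. Unset Printing Implicit Defensive.
Import GRing.Theory.
Local Open Scope ring_scope.

(* Bivariate polynomials P(x, y) in Z[x,y] are represented as
   {poly {poly int}}: outer variable y, coefficients in Z[x]. *)

Definition f_xy : {poly {poly int}} :=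
  (('X ^+ 2 : {poly int})%:P) * 'X + (('X ^+ 2 : {poly int})%:P) + 'X ^+ 2 - 'X.

(* f(x_{n-1}, x_n) viewed as a polynomial in x_{n-1} whose coefficients lie in
   Z[x][x_n] = {poly {poly int}} (outer x_n, inner x):
   (x_n + 1) x_{n-1}^2 + (x_n^2 - x_n). *)
Definition f_shift : {poly {poly {poly int}}} :=
  (('X + 1 : {poly {poly int}}) *: 'X ^+ 2)
  + (('X ^+ 2 - 'X : {poly {poly int}})%:P).

(* Rsup k = R^{(k+1)}(x, x_{k+1}), outer variable x_{k+1}, inner x.
   R^{(1)} = f(x, x_1);
   R^{(n)} = Res_{x_{n-1}} (R^{(n-1)}(x, x_{n-1}), f(x_{n-1}, x_n)), where
   R^{(n-1)} is lifted to a polynomial in x_{n-1} with coefficients in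
   Z[x][x_n] (constant in x_n). *)
Fixpoint Rsup (k : nat) : {poly {poly int}} :=
  match k with
  | 0 => f_xy
  | k'.+1 => resultant (map_poly polyC (Rsup k')) f_shift
  end.

Definition Rdiag (n : nat) : {poly int} := (Rsup n.-1).[('X : {poly int})].

From mathcomp Require Import all_boot all_order all_algebra.
From mathcomp Require Import perm zify polyXY.
Set Implicit Arguments. Unset Strict Implicit. Unset Printing Implicit Defensive.
Import GRing.Theory.
Local Open Scope ring_scope.

(* View R^(n) as a polynomial P in y = x_n over Z[x] and let
   d = 2^n.  Its shape is: deg_y P = d with a constant leading coefficient,
   deg_x P <= d, and a nonzero coefficient of x^d y^(d-1).  Then x^d y^(d-1) is
   the only monomial of P(x, x) of total degree >= 2d - 1, so deg R_n = 2d - 1.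
   The resultant against f(t, y) = (y + 1) t^2 + (y^2 - y) is a Sylvester
   determinant with two rows of coefficients of P and d rows of (y^2 - y, 0, y + 1).
   Taking top coefficients row by row (degree 2 in y for the quadratic rows,
   degree d in x for the two rows of P) shows that the shape passes from d to 2d,
   the two distinguished coefficients getting squared. *)

Lemma gt_size (R : nzSemiRingType) (p : {poly R}) i : p`_i != 0 -> (i < size p)%N.
Proof. by rewrite ltnNge; apply: contra => /(nth_default 0)/eqP. Qed.

Section TopCoefficients.

Variable R : comNzRingType.
Implicit Types p q : {poly R}.

Lemma coef_top_mul p q m n : (size p <= m.+1)%N -> (size q <= n.+1)%N ->
  (size (p * q)%R <= (m + n).+1)%N /\ (p * q)`_(m + n) = p`_m * q`_n.
Proof.
move=> sp sq; split.
  by apply: leq_trans (size_polyMleq _ _) _; lia.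
rewrite coefM (bigD1 (Ordinal (leq_addr n m.+1 : (m < (m + n).+1)%N))) //=.
rewrite addKn big1 ?addr0 // => j /eqP neq_jm.
have [ltjm|ltmj|ejm] := ltngtP j m.
- by rewrite [q`__]nth_default ?mulr0 //; apply: leq_trans sq _; lia.
- by rewrite nth_default ?mul0r //; apply: leq_trans sp _.
- by case: neq_jm; apply: val_inj.
Qed.

Lemma coef_top_prod (I : Type) (r : seq I) (F : I -> {poly R}) (w : I -> nat) :
  (forall i, size (F i) <= (w i).+1)%N ->
  (size (\prod_(i <- r) F i)%R <= (\sum_(i <- r) w i).+1)%N /\
  (\prod_(i <- r) F i)`_(\sum_(i <- r) w i) = \prod_(i <- r) (F i)`_(w i).
Proof.
move=> sF; elim: r => [|i r [sP cP]]; first by rewrite !big_nil size_poly1 coef1.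
by have [sM cM] := coef_top_mul (sF i) sP; rewrite !big_cons cM cP.
Qed.

Lemma coef_top_det n (A : 'M[{poly R}]_n) (w : 'I_n -> nat) :
  (forall i j, size (A i j) <= (w i).+1)%N ->
  (size (\det A) <= (\sum_i w i).+1)%N /\
  (\det A)`_(\sum_i w i) = \det (\matrix_(i, j) (A i j)`_(w i)).
Proof.
move=> sA; pose top_prod (s : 'S_n) := coef_top_prod (index_enum 'I_n) (fun i => sA i (s i)).
split.
  apply: leq_trans (size_sum _ _ _) _; apply/bigmax_leqP => s _.
  have [sP _] := top_prod s.
  by case: (odd_perm s); rewrite ?expr1 ?mulN1r ?size_polyN ?expr0 ?mul1r.
rewrite /determinant coef_sum; apply: eq_bigr => s _.
have [_ cP] := top_prod s; under [in RHS]eq_bigr do rewrite mxE.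
by case: (odd_perm s); rewrite ?expr1 ?mulN1r ?coefN ?expr0 ?mul1r ?cP.
Qed.

End TopCoefficients.

Lemma det_unit_rows (R : comNzRingType) d (F : nat -> nat -> R) :
  (forall i j, (1 < i < d.+2)%N -> (j < d.+2)%N -> F i j = (j == i - 2)%N%:R) ->
  \det (\matrix_(i < d.+2, j < d.+2) F i j) = F 0 d * F 1 d.+1 - F 0 d.+1 * F 1 d.
Proof.
elim: d F => [|d IH] F unitF.
  rewrite (expand_det_row _ ord0) !big_ord_recl big_ord0 addr0 /cofactor.
  by rewrite !det_mx11 !mxE /= expr0 mul1r expr1 mulN1r mulrN.
have ltd : (d < d.+3)%N by lia.
rewrite (expand_det_row _ ord_max) (bigD1 (inord d)) //= big1 ?addr0; last first.
  move=> j /negbTE neq_jd; rewrite mxE unitF //=.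
  by rewrite -(inj_eq val_inj) /= inordK // in neq_jd; rewrite subn2 neq_jd mul0r.
rewrite mxE unitF ?inordK //= subn2 eqxx mul1r /cofactor.
rewrite /= inordK // -signr_odd addSn addSn /= negbK oddD addbb expr0 mul1r.
set M := row' _ _.
have -> : M = \matrix_(i < d.+2, j < d.+2) F i (j + (d <= j))%N.
  apply/matrixP => i j; rewrite !mxE /= /bump inordK //.
  by rewrite [(d.+2 <= i)%N]leqNgt ltn_ord [(_ + j)%N]addnC.
rewrite (IH (fun i j => F i (j + (d <= j))%N)) ?leqnn ?leqnSn ?addn1 // => i j lti ltj.
rewrite unitF; first by congr (_%:R); apply/eqP/eqP; case: leqP; lia.
  by lia.
by case: leqP; lia.
Qed.

(* The Sylvester matrix of c_0 + c_1 t + ... + c_d t^d and a t^2 + b. *)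
Definition Sylvester_X2 (R : nzRingType) d (c : nat -> R) (a b : R) : 'M[R]_d.+2 :=
  \matrix_(i, j) if (i < 2)%N then c (j - i)%N *+ (i <= j)%N
                 else b *+ (j == (i - 2)%N :> nat) + a *+ (j == i :> nat).

Lemma det_castmx (R : comNzRingType) m n (e : m = n) (A : 'M[R]_m) :
  \det (castmx (e, e) A) = \det A.
Proof. by case: n / e; rewrite castmx_id. Qed.

Lemma resultant_X2 (R : comNzRingType) (p : {poly R}) (a b : R) d :
  a != 0 -> size p = d.+1 ->
  resultant p (a *: 'X^2 + b%:P) = \det (Sylvester_X2 d (nth 0 p) a b).
Proof.
move=> a_neq0 sp; set q := _ + _.
have cq k : q`_k = a *+ (k == 2%N) + b *+ (k == 0%N).
  by rewrite coefD coefZ coefXn mulr_natr coefC !mulrb.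
have sq : size q = 3%N.
  apply/anti_leq/andP; split.
    by apply/leq_sizeP => -[|[|[|k]]] // _; rewrite cq addr0.
  by apply: gt_size; rewrite cq /= mulr1n mulr0n addr0.
have dS : ((size q).-1 + (size p).-1 = d.+2)%N by rewrite sq sp.
rewrite /resultant -(det_castmx dS); congr (\det _); apply/matrixP => i j.
rewrite castmxE Sylvester_mxE mxE /=.
case: splitP => k /= ->.
  by have := ltn_ord k; rewrite [in X in (_ < X)%N]sq => ->.
rewrite sq /= addKn cq mulrnDl -!mulrnA addrC.
by congr (_ *+ _ + _ *+ _); lia.
Qed.

Lemma eq_Sylvester_X2 (R : nzRingType) d (c c' : nat -> R) a b :
  c =1 c' -> Sylvester_X2 d c a b = Sylvester_X2 d c' a b.
Proof. by move=> eq_c; apply/matrixP => i j; rewrite !mxE eq_c. Qed.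

Lemma map_Sylvester_X2 (R S : nzRingType) (f : {additive R -> S}) d c a b :
  map_mx f (Sylvester_X2 d c a b) = Sylvester_X2 d (f \o c) (f a) (f b).
Proof. by apply/matrixP => i j; rewrite !mxE; case: ifP; rewrite ?raddfD !raddfMn. Qed.

Lemma sum_Sylvester_weights d m n :
  (\sum_(i < d.+2) (if (i < 2)%N then m else n) = m.*2 + n * d)%N.
Proof. by rewrite !big_ord_recl big_const_ord iter_addn_0 addnA addnn mulnC. Qed.

Lemma coef_top_det_Sylvester_X2 (R : comNzRingType) d (c : nat -> {poly R})
    (a b : {poly R}) m n :
  (forall j, size (c j) <= m.+1)%N -> (size a <= n.+1)%N -> (size b <= n.+1)%N ->
  (size (\det (Sylvester_X2 d c a b)) <= (m.*2 + n * d).+1)%N /\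
  (\det (Sylvester_X2 d c a b))`_(m.*2 + n * d) =
    \det (Sylvester_X2 d (fun j => (c j)`_m) a`_n b`_n).
Proof.
move=> sc sa sb.
have size_Mn (p : {poly R}) k (t : bool) : (size p <= k -> size (p *+ t) <= k)%N.
  by case: t; rewrite ?mulr0n ?size_poly0.
have [] := @coef_top_det R _ (Sylvester_X2 d c a b) (fun i => if (i < 2)%N then m else n).
  move=> i j; rewrite mxE; case: ifP => _; first exact: size_Mn.
  by apply: leq_trans (size_polyD _ _) _; rewrite geq_max !size_Mn.
rewrite sum_Sylvester_weights => -> ->; split => //; congr (\det _).
by apply/matrixP => i j; rewrite !mxE; case: ifP; rewrite ?coefD !coefMn.
Qed.

Lemma det_Sylvester_X2_01 (R : comNzRingType) d (c : nat -> R) :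
  c d.+1 = 0 -> \det (Sylvester_X2 d c 0 1) = c d ^+ 2.
Proof.
move=> cd1; rewrite (det_unit_rows (F := fun i j =>
  if (i < 2)%N then c (j - i)%N *+ (i <= j)%N else 1 *+ (j == i - 2)%N + 0 *+ (j == i)%N)).
  by rewrite /= !subn0 subSS subn0 cd1 !mulr1n mul0r subr0 expr2.
by move=> i j /andP[lt1i _] _; rewrite ltnNge lt1i /= mul0rn addr0.
Qed.

Lemma det_Sylvester_X2_lastcol (R : comNzRingType) d (c : nat -> R) a b :
  c d.+1 = 0 -> c d.+2 = 0 ->
  \det (Sylvester_X2 d.+1 c a b) = a * \det (Sylvester_X2 d c a b).
Proof.
move=> cd1 cd2; rewrite (expand_det_col _ ord_max) (bigD1 ord_max) //= big1 ?addr0.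
  rewrite mxE /= eqxx subn2 (_ : (d.+2 == d)%N = false); last by lia.
  rewrite mulr0n add0r mulr1n /cofactor addnn -signr_odd odd_double expr0 mul1r.
  congr (_ * \det _); apply/matrixP => i j; rewrite !mxE /=.
  by rewrite /bump [(d.+2 <= i)%N]leqNgt [(d.+2 <= j)%N]leqNgt !ltn_ord.
move=> i /eqP neq_i; rewrite mxE; case: ifP => lt_i2.
  rewrite (_ : c _ = 0) ?mul0rn ?mul0r //.
  by move: lt_i2; case: (nat_of_ord i) => [|[|]] // _; rewrite ?subn0 ?subSS ?subn0.
have lt_i : (i < d.+2)%N.
  rewrite ltn_neqAle -ltnS ltn_ord andbT.
  by apply/eqP => eq_i; apply: neq_i; apply: val_inj.
rewrite (@gtn_eqF (i - 2)%N d.+2) ?(gtn_eqF lt_i) ?mulr0n ?addr0 ?mul0r //; lia.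
Qed.

Definition Rstep (P : {poly {poly int}}) := resultant (map_poly polyC P) f_shift.

Lemma Rstep_Sylvester (P : {poly {poly int}}) d : size P = d.+1 ->
  Rstep P = \det (Sylvester_X2 d (fun j => (P`_j)%:P) ('X + 1) ('X^2 - 'X)).
Proof.
move=> sP; rewrite /Rstep /f_shift (@resultant_X2 _ _ _ _ d) ?size_map_polyC //.
  by congr (\det _); apply: eq_Sylvester_X2 => j; rewrite coef_map.
by rewrite -size_poly_eq0 -polyC1 size_XaddC.
Qed.

Definition Rshape (P : {poly {poly int}}) d :=
  [/\ size P = d.+1, (size (P`_d)%R <= 1)%N, (sizeY P <= d.+1)%N,
      P`_d.-1`_d != 0 & (1 < d)%N].

Lemma size_X2subX_leq (R : nzRingType) : (size ('X^2 - 'X : {poly R})%R <= 3)%N.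
Proof. by apply/leq_sizeP => -[|[|[|k]]] //; rewrite coefB coefXn coefX subr0. Qed.

Lemma coef_top_det_Sylvester_f (R : comNzRingType) d (c : nat -> R) : c d.+1 = 0 ->
  let S := \det (Sylvester_X2 d (fun j => (c j)%:P) ('X + 1) ('X^2 - 'X)) in
  (size S <= (d.*2).+1)%N /\ S`_(d.*2) = c d ^+ 2.
Proof.
move=> cd1 /=; rewrite -mul2n.
have sa : (size ('X + 1 : {poly R})%R <= 3)%N by rewrite -polyC1 size_XaddC.
have [-> ->] :=
  coef_top_det_Sylvester_X2 d (fun j => size_polyC_leq1 (c j)) sa (size_X2subX_leq _).
rewrite coefD coefX coef1 coefB coefXn coefX subr0 addr0 /= mulr0n mulr1n.
by rewrite det_Sylvester_X2_01 coefC //= cd1.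
Qed.

Lemma Rstep_lead_coef (P : {poly {poly int}}) d : Rshape P d ->
  (size (Rstep P) <= (d.*2).+1)%N /\ (Rstep P)`_(d.*2) = P`_d ^+ 2.
Proof.
case=> sP _ _ _ _; rewrite (Rstep_Sylvester sP).
by apply: coef_top_det_Sylvester_f; rewrite nth_default ?sP.
Qed.

Lemma coef_subtop_det_Sylvester_f (R : comNzRingType) d (c : nat -> R) :
  c d.+1 = 0 -> c d.+2 = 0 ->
  (\det (Sylvester_X2 d.+1 (fun j => (c j)%:P) ('X + 1) ('X^2 - 'X)))`_(d.*2.+1) =
    c d ^+ 2.
Proof.
move=> cd1 cd2; rewrite det_Sylvester_X2_lastcol ?cd1 ?cd2 //.
have [sQ cQ] := coef_top_det_Sylvester_f cd1.
have sa : (size ('X + 1 : {poly R})%R <= 2)%N by rewrite -polyC1 size_XaddC.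
have [_ ->] := coef_top_mul sa sQ.
by rewrite cQ coefD coefX coef1 addr0 mul1r.
Qed.

Lemma Rstep_sizeY_top_coef (P : {poly {poly int}}) d : Rshape P d ->
  (sizeY (Rstep P) <= (d.*2).+1)%N /\ (Rstep P)`_(d.*2).-1`_(d.*2) = P`_d.-1`_d ^+ 2.
Proof.
case=> sP sPd sPY _ lt1d; rewrite sizeYE -coef_swapXY (Rstep_Sylvester sP).
rewrite -det_map_mx map_Sylvester_X2 /=.
have -> : swapXY ('X + 1 : {poly {poly int}}) = ('X + 1)%:P.
  by rewrite rmorphD rmorph1 /= swapXY_X rmorphD rmorph1.
have -> : swapXY ('X^2 - 'X : {poly {poly int}}) = ('X^2 - 'X)%:P.
  by rewrite rmorphB rmorphXn /= swapXY_X rmorphB rmorphXn.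
have sc j : (size (swapXY (P`_j)%:P) <= d.+1)%N.
  by rewrite swapXY_polyC size_map_polyC (leq_trans (max_size_coefXY _ _)).
have [] := coef_top_det_Sylvester_X2 d sc (size_polyC_leq1 ('X + 1 : {poly int}))
  (size_polyC_leq1 ('X^2 - 'X : {poly int})).
rewrite mul0n addn0 => -> ->; split => //.
under eq_Sylvester_X2 => j do rewrite swapXY_polyC coef_map.
(* P_d is constant, so the last column of the x^d-part reduces to the factor y + 1. *)
rewrite !coefC /=; case: d lt1d sP sPd {sPY sc} => [|e] // _ sP sPd.
apply: coef_subtop_det_Sylvester_f; first by rewrite nth_default // (leq_trans sPd).
by rewrite [P`_e.+2]nth_default ?sP // coef0.
Qed.

Lemma size_Rshape_diag (P : {poly {poly int}}) d : Rshape P d -> size P.['X] = d.*2.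
Proof.
case=> sP sPd sPY nz_coef lt1d.
have sc i : (size (P`_i)%R <= d.+1)%N := leq_trans (max_size_coefXY P i) sPY.
have ltd : (d.-1 < d.+1)%N by lia.
have s_lead : size (P`_d.-1 * 'X^(d.-1)) = d.*2.
  have sPd1 : size P`_d.-1 = d.+1 by apply/anti_leq; rewrite sc gt_size.
  by rewrite size_mulXn -?size_poly_eq0 sPd1 //; lia.
rewrite horner_coef sP (bigD1 (Ordinal ltd)) //= size_polyDl s_lead //.
apply: leq_ltn_trans (size_sum _ _ _) _.
have -> : d.*2 = (d.*2).-1.+1 by lia.
rewrite ltnS; apply/bigmax_leqP_seq => -[i lti] _; rewrite -(inj_eq val_inj) /= => ne_i.
apply: leq_trans (size_polyMleq _ _) _; rewrite size_polyXn addnS /= -addnn.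
have [-> | ne_id] := eqVneq i d.
  by rewrite (leq_trans (leq_add sPd (leqnn d))) //; lia.
by rewrite (leq_trans (leq_add (sc i) (leqnn i))) //; lia.
Qed.

Lemma Rshape_f_xy : Rshape f_xy 2.
Proof.
have ef : f_xy = Poly [:: 'X^2; 'X^2 - 1; 1].
  apply/polyP => k; rewrite coef_Poly /f_xy !(coefD, coefB, coefN, coefMX, coefXn, coefX, coefC).
  by case: k => [|[|[|k]]]; rewrite /= ?add0r ?addr0 ?subr0 ?oppr0 ?nth_nil.
have sf : f_xy = [:: 'X^2; 'X^2 - 1; 1] :> seq _ by rewrite ef (@PolyK _ 0) //= oner_eq0.
have sX2 : size ('X^2 - 1 : {poly int}) = 3 by rewrite -polyC1 size_XnsubC.
rewrite /Rshape /sizeY sf /= size_poly1; split => //.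
  by rewrite !big_ord_recl big_ord0 /= size_polyXn sX2 size_poly1.
by rewrite coefB coefXn coef1 subr0 oner_eq0.
Qed.

Lemma Rshape_Rstep (P : {poly {poly int}}) d : Rshape P d -> Rshape (Rstep P) d.*2.
Proof.
move=> shP; have [sR cR] := Rstep_lead_coef shP; have [sYR cXR] := Rstep_sizeY_top_coef shP.
case: shP => sP sPd _ nz_coef lt1d.
have nz_lead : P`_d != 0.
  by rewrite -[d]/(d.+1.-1) -sP -lead_coefE lead_coef_eq0 -size_poly_eq0 sP.
split => //.
- by apply/anti_leq; rewrite sR gt_size // cR expf_neq0.
- by rewrite cR (leq_trans (size_poly_exp_leq _ _)) //; case: (size _) sPd => [|[|]].
- by rewrite cXR expf_neq0.
- by rewrite -addnn ltn_addl.
Qed.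

Lemma Rshape_Rsup k : Rshape (Rsup k) (2 ^ k.+1).
Proof.
elim: k => [|k IH]; first exact: Rshape_f_xy.
by rewrite expnS mul2n; apply: Rshape_Rstep.
Qed.

Theorem mainTheorem19 (n : nat) : (1 <= n)%N ->
  ((size (Rdiag n)).-1 = 2 ^ n.+1 - 1)%N.
Proof.
case: n => // n _; rewrite /Rdiag /= (size_Rshape_diag (Rshape_Rsup n)).
by rewrite -mul2n -expnS subn1.
Qed.
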